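(* Let $n\ge 2$. The probability $p_n$ that two randomly generated (i.e. an unordered pair of distinct matrices chosen uniformly at random) $n^2\times n^2$ S-permutation matrices are disjoint is $$p_n=\frac{\xi_n}{(n!)^{2n}-1},\qquad\text{where}\qquad \xi_n=\sum_{\overline{A}\in\overline{\mathfrak{B}}_n,\ \varepsilon(\overline{A})\ge 2}(-1)^{\varepsilon(\overline{A})}\,|\overline{A}|\prod_{i=0}^{n-2}\left[(n-i)!\right]^{\psi_i(\overline{A})}.$$
   Context: An $n^2\times n^2$ S-permutation matrix is an $n^2\times n^2$ binary matrix which, when partitioned into $n^2$ non-intersecting consecutive $n\times n$ blocks, contains exactly one $1$ in each row, each column and each block; there are $(n!)^{2n}$ of them. Two binary matrices $(a_{ij}),(b_{ij})$ of equal size are disjoint if there are no $i,j$ with $a_{ij}=b_{ij}=1$. $\mathfrak{B}_n$ is the set of $n\times n$ binary matrices. For $A\in\mathfrak{B}_n$, $r_k(A)$ (resp. $c_k(A)$) is the number of rows (resp. columns) of $A$ with exactly $k$ ones, $\psi_k(A)=r_k(A)+c_k(A)$, and $\varepsilon(A)$ is the total number of ones of $A$. $A\sim B$ iff $B$ is obtained from $A$ by permuting rows; $\overline{A}$ is the equivalence class of $A$, $|\overline{A}|$ its cardinality, $\overline{\mathfrak{B}}_n=\mathfrak{B}_n/\!\sim$; $\psi_k,\varepsilon$ are defined on classes via any representative. *)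

From mathcomp Require Import all_boot all_order all_fingroup all_algebra.
Set Implicit Arguments. Unset Strict Implicit. Unset Printing Implicit Defensive.
Import GRing.Theory Num.Theory.

Definition is_sperm (n : nat) (A : 'M[bool]_(n ^ 2)) : bool :=
  [&& [forall i, #|[set j | A i j]| == 1],
      [forall j, #|[set i | A i j]| == 1] &
      [forall bi : 'I_n, forall bj : 'I_n,
         #|[set ij : 'I_(n ^ 2) * 'I_(n ^ 2) |
             [&& ij.1 %/ n == bi, ij.2 %/ n == bj & A ij.1 ij.2]]| == 1]].

Definition sperm_set (n : nat) : {set 'M[bool]_(n ^ 2)} :=
  [set A | is_sperm A].

Definition disjoint_mx (m : nat) (A B : 'M[bool]_m) : bool :=
  [forall i, forall j, ~~ (A i j && B i j)].

Definition sperm_pairs (n : nat) : {set {set 'M[bool]_(n ^ 2)}} :=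
  [set P : {set 'M[bool]_(n ^ 2)} | (P \subset sperm_set n) && (#|P| == 2)].

Definition disjoint_sperm_pairs (n : nat) : {set {set 'M[bool]_(n ^ 2)}} :=
  [set P in sperm_pairs n |
     [forall A in P, forall B in P, (A != B) ==> disjoint_mx A B]].

Definition p_n (n : nat) : rat :=
  (#|disjoint_sperm_pairs n|)%:R / (#|sperm_pairs n|)%:R.

Definition r_k (n k : nat) (A : 'M[bool]_n) : nat :=
  #|[set i | #|[set j | A i j]| == k]|.
Definition c_k (n k : nat) (A : 'M[bool]_n) : nat :=
  #|[set j | #|[set i | A i j]| == k]|.
Definition psi (n k : nat) (A : 'M[bool]_n) : nat := r_k k A + c_k k A.
Definition eps (n : nat) (A : 'M[bool]_n) : nat :=
  #|[set ij : 'I_n * 'I_n | A ij.1 ij.2]|.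

Definition row_equiv (n : nat) (A B : 'M[bool]_n) : bool :=
  [exists s : 'S_n, B == row_perm s A].

Definition classes (n : nat) : {set {set 'M[bool]_n}} :=
  equivalence_partition (@row_equiv n) [set: 'M[bool]_n].

(* A representative of a class (classes are nonempty). *)
Definition cls_repr (n : nat) (C : {set 'M[bool]_n}) : 'M[bool]_n :=
  odflt (const_mx false) [pick A in C].

Definition xi (n : nat) : int :=
  \sum_(C in classes n | 2 <= eps (cls_repr C))
     ((-1) ^+ eps (cls_repr C) * (#|C|)%:Z *
      (\prod_(i < n.-1) ((n - i)`! ^ psi i (cls_repr C))%N)%:Z)%R.

(* An S-permutation matrix is encoded by two families of permutations of 'I_n:
   in block (b1, b2) its 1 sits at local row c1(b1)(b2) and local column
   c2(b2)(b1).  Hence there are N = (n!)^(2n) such matrices, and two of them are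
   disjoint iff their codes agree on no block.  For a fixed code, the disjoint
   ones are counted by inclusion-exclusion over the set E of blocks on which
   agreement is imposed: the codes agreeing on E number
   prod_rows (n - r)! * prod_cols (n - c)!, which is prod_i ((n - i)!)^psi_i(E)
   when E is read as an n x n binary matrix.  The terms with |E| <= 1 cancel,
   and grouping the others into row-permutation classes gives xi_n.  Double
   counting then yields N xi_n / 2 disjoint pairs among N (N - 1) / 2. *)

From Pilot Require Import Defs.
From mathcomp Require Import all_boot all_order all_fingroup all_algebra.
From mathcomp Require Import zify ring.
Import GRing.Theory Num.Theory.
Set Implicit Arguments. Unset Strict Implicit. Unset Printing Implicit Defensive.

Lemma cards1_uniq (T : finType) (P : pred T) x y :
  #|[set z | P z]| == 1 -> P x -> P y -> x = y.
Proof.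
move/eqP/eq_leq/card_le1_eqP => uniq_P Px Py.
by apply: uniq_P; rewrite inE.
Qed.

Lemma card_perm_fix (T : finType) (t : {perm T}) (S : {set T}) :
  #|[set s : {perm T} | [forall x in S, s x == t x]]| = (#|T| - #|S|)`!.
Proof.
have -> : [set s : {perm T} | [forall x in S, s x == t x]] =
          [set (p * t)%g | p in [set p | perm_on (~: S) p]].
  apply/setP => s; rewrite inE; apply/idP/imsetP => [/forall_inP fix_s|[p]].
    exists (s * t^-1)%g; last by rewrite -mulgA mulVg mulg1.
    rewrite inE; apply/subsetP => x; rewrite !inE permM; apply: contra => Sx.
    by rewrite (eqP (fix_s x Sx)) permK.
  rewrite inE => on_p ->; apply/forall_inP => x Sx; rewrite permM (out_perm on_p) //.
  by rewrite inE negbK.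
rewrite card_imset; last exact: mulIg.
have -> : #|[set p | perm_on (~: S) p]| = #|perm_on (~: S)|.
  by apply: eq_card => p; rewrite inE.
by rewrite card_perm (cardsCs (~: S)) setCK.
Qed.

Lemma card_ffun_family (I T : finType) (Q : I -> {set T}) :
  #|[set f : {ffun I -> T} | [forall i, f i \in Q i]]| = \prod_i #|Q i|.
Proof.
rewrite (eq_card (B := family Q)); last by move=> f; rewrite inE.
by rewrite card_family foldrE big_image; apply: eq_bigl.
Qed.

Lemma prodn_fibers (I : finType) (F : nat -> nat) (h : I -> nat) (K : nat) :
  (forall i, h i < K) ->
  \prod_i F (h i) = \prod_(k < K) F k ^ #|[set i | h i == k]|.
Proof.
move=> h_lt; rewrite (partition_big (fun i => Ordinal (h_lt i)) xpredT) //=.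
apply: eq_bigr => k _; rewrite (eq_bigr (fun _ => F k)); last by move=> i /eqP <-.
by rewrite prod_nat_const; congr (_ ^ _); apply: eq_card => i; rewrite !inE.
Qed.

Lemma inclusion_exclusion_indicator (R : comPzRingType) (I : finType) (a : pred I) :
  (([forall i, ~~ a i])%:R = \sum_(J : {set I}) (-1) ^+ #|J| * ([forall i in J, a i])%:R :> R)%R.
Proof.
have -> : (([forall i, ~~ a i])%:R = \prod_i (1 - (a i)%:R) :> R)%R.
  case: (boolP [forall i, ~~ a i]) => [/forallP na|].
    by rewrite big1 // => i _; rewrite (negbTE (na i)) subr0.
  rewrite negb_forall => /existsP[i]; rewrite negbK => ai.
  by rewrite (bigD1 i) //= ai subrr mul0r.
rewrite (eq_bigr (fun i => - (a i)%:R + 1)%R) => [|i _]; last by rewrite addrC.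
rewrite bigA_distr; apply: eq_bigr => J _; rewrite -big_mkcond /= prodrN.
congr (_ * _)%R; case: (boolP [forall i in J, a i]) => [/forall_inP aJ|].
  by rewrite big1 // => i /aJ ->.
rewrite negb_forall_in => /existsP[i /andP[Ji nai]].
by rewrite (bigD1 i) //= (negbTE nai) mul0r.
Qed.

Definition related_pairs (T : finType) (S : {set T}) (r : rel T) : {set {set T}} :=
  [set P in [set P : {set T} | (P \subset S) && (#|P| == 2)] |
     [forall x in P, forall y in P, (x != y) ==> r x y]].

Lemma double_counting (T : finType) (S : {set T}) (r : rel T) :
  {in S &, symmetric r} -> {in S, irreflexive r} ->
  2 * #|related_pairs S r| = \sum_(x in S) #|[set y in S | r x y]|.
Proof.
move=> r_sym r_irr.
have pairs_at x : x \in S ->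
    [set P in related_pairs S r | x \in P] = [set [set x; y] | y in [set y in S | r x y]].
  move=> Sx; apply/setP => P; rewrite !inE; apply/andP/imsetP => [[]|[y]].
    case/andP=> /andP[sub_PS /cards2P[a [b [ab eP]]]] /forall_inP rP; subst P.
    have r_ab : r a b by have /forall_inP/(_ b) := rP a (set21 a b); rewrite set22 ab; apply.
    have Sa : a \in S by rewrite (subsetP sub_PS) ?set21.
    have Sb : b \in S by rewrite (subsetP sub_PS) ?set22.
    rewrite !inE => /orP[]/eqP ->; [exists b | exists a]; rewrite ?inE ?Sa ?Sb //.
    - by rewrite r_sym.
    - by rewrite setUC.
  rewrite inE => /andP[Sy rxy] ->.
  have xy : x != y by apply: contraTneq rxy => <-; rewrite r_irr.
  split; last by rewrite set21.
  rewrite cards2 xy andbT; apply/andP; split.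
    by apply/subsetP => z /set2P[]->.
  apply/forall_inP => u /set2P[]-> ; apply/forall_inP => v /set2P[]->;
    by rewrite ?eqxx ?rxy ?implybT // r_sym ?rxy ?implybT.
have card_pair P : P \in related_pairs S r -> #|P| = 2.
  by rewrite !inE => /andP[/andP[_ /eqP]].
rewrite mulnC -sum_nat_const (eq_bigr _ (fun P hP => esym (card_pair P hP))).
under eq_bigr => P _ do rewrite -sum1_card.
rewrite (exchange_big_dep (mem S)) /=; last first.
  by move=> P x; rewrite !inE => /andP[/andP[sub_PS _] _]; apply/subsetP.
apply: eq_bigr => x Sx; rewrite -[RHS](card_in_imset (f := fun y => [set x; y])).
  by rewrite -pairs_at // -sum1_card; apply: eq_bigl => P; rewrite !inE andbC.
move=> y z; rewrite !inE => /andP[_ rxy] /andP[_ rxz] /setP/(_ z).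
rewrite !inE eqxx orbT => /orP[/eqP xz|/eqP //].
by move: rxz; rewrite xz r_irr.
Qed.

Lemma disjoint_mx_sym (k : nat) : symmetric (@disjoint_mx k).
Proof.
move=> A B; apply/forallP/forallP => disj i; apply/forallP => j;
  by have /forallP/(_ j) := disj i; rewrite andbC.
Qed.

Section RowClasses.
Variable n : nat.
Implicit Types (s : 'S_n) (M : 'M[bool]_n).

Lemma eps_row_perm s M : eps (row_perm s M) = eps M.
Proof.
have s1_inj : injective (fun ij : 'I_n * 'I_n => (s ij.1, ij.2)).
  by move=> [a b] [c d] /= [/perm_inj -> ->].
by rewrite /eps -[RHS](card_preimset _ s1_inj); apply: eq_card => ij; rewrite !inE mxE.
Qed.

Lemma r_k_row_perm s M k : r_k k (row_perm s M) = r_k k M.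
Proof.
rewrite /r_k -[RHS](card_preimset _ (@perm_inj _ s)).
apply: eq_card => i; rewrite !inE; congr (_ == _).
by apply: eq_card => j; rewrite !inE mxE.
Qed.

Lemma c_k_row_perm s M k : c_k k (row_perm s M) = c_k k M.
Proof.
apply: eq_card => j; rewrite !inE; congr (_ == _).
rewrite -[RHS](card_preimset _ (@perm_inj _ s)).
by apply: eq_card => i; rewrite !inE mxE.
Qed.

Lemma psi_row_perm s M k : psi k (row_perm s M) = psi k M.
Proof. by rewrite /psi r_k_row_perm c_k_row_perm. Qed.

Lemma row_equiv_equivalence : equivalence_rel (@row_equiv n).
Proof.
move=> M N P; split; first by apply/existsP; exists 1%g; rewrite row_perm1.
case/existsP => s /eqP ->; apply/existsP/existsP => [[t /eqP ->]|[t /eqP ->]].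
  by exists (t * s^-1)%g; rewrite -row_permM -mulgA mulVg mulg1.
by exists (t * s)%g; rewrite row_permM.
Qed.

Lemma sum_row_classes (V : nmodType) (F : 'M[bool]_n -> V) :
  (forall s M, F (row_perm s M) = F M) ->
  (\sum_(C in Defs.classes n) F (cls_repr C) *+ #|C| = \sum_M F M)%R.
Proof.
move=> F_inv.
have equiv_in : {in [set: 'M[bool]_n] & &, equivalence_rel (@row_equiv n)}.
  by move=> M N P _ _ _; apply: row_equiv_equivalence.
have /and3P[/eqP cover_classes triv_classes _] : partition (Defs.classes n) [set: _] :=
  equivalence_partitionP equiv_in.
rewrite (eq_bigl (fun M => M \in cover (Defs.classes n))); last first.
  by move=> M; rewrite cover_classes inE.
rewrite big_trivIset //.
apply: eq_bigr => C classC; rewrite -sumr_const; apply: eq_bigr => M CM.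
have CR : cls_repr C \in C.
  by rewrite /cls_repr; case: pickP => [//|/(_ M)]; rewrite CM.
have := pblock_equivalence_partition equiv_in (in_setT (cls_repr C)) (in_setT M).
rewrite (def_pblock triv_classes classC CR) CM => /esym/existsP[s /eqP ->].
by rewrite F_inv.
Qed.

End RowClasses.

Definition psi_weight (n : nat) (M : 'M[bool]_n) : nat :=
  \prod_(i < n.-1) ((n - i)`! ^ psi i M).

Lemma xiE (n : nat) :
  xi n = (\sum_(M : 'M[bool]_n | (2 <= eps M)%N) (-1) ^+ eps M * (psi_weight M)%:Z)%R.
Proof.
rewrite big_mkcond -sum_row_classes => [|s M]; last first.
  by rewrite eps_row_perm /psi_weight; under eq_bigr do rewrite psi_row_perm.
rewrite /xi big_mkcondr; apply: eq_bigr => C _; case: ifP => _; last by rewrite mul0rn.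
by rewrite -mulrnAr -mulrA -mulr_natl natz.
Qed.

Section SPermutationMatrices.
Variable n : nat.
Local Notation m := n.+1.
Implicit Types (i j : 'I_(m ^ 2)) (b x : 'I_m).

Lemma blk_subproof i : i %/ m < m.
Proof. by rewrite ltn_divLR // mulnn. Qed.
Lemma bidx_subproof b x : b * m + x < m ^ 2.
Proof. by have := ltn_ord b; have := ltn_ord x; rewrite expnS expn1; nia. Qed.

Definition blk i : 'I_m := Ordinal (blk_subproof i).
Definition off i : 'I_m := Ordinal (ltn_pmod i (ltn0Sn n)).
Definition bidx b x : 'I_(m ^ 2) := Ordinal (bidx_subproof b x).

Lemma blk_bidx b x : blk (bidx b x) = b.
Proof. by apply: val_inj; rewrite /= divnMDl // divn_small ?addn0. Qed.
Lemma off_bidx b x : off (bidx b x) = x.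
Proof. by apply: val_inj; rewrite /= modnMDl modn_small. Qed.
Lemma bidx_blk_off i : bidx (blk i) (off i) = i.
Proof. by apply: val_inj; rewrite /= -divn_eq. Qed.
Lemma blk_off_inj i j : blk i = blk j -> off i = off j -> i = j.
Proof. by move=> eq_blk eq_off; rewrite -[i]bidx_blk_off eq_blk eq_off bidx_blk_off. Qed.

Definition sperm_code := ({ffun 'I_m -> 'S_m} * {ffun 'I_m -> 'S_m})%type.
Implicit Types (c d : sperm_code) (E : {set 'I_m * 'I_m}).

Definition sperm_of (c : sperm_code) : 'M[bool]_(m ^ 2) :=
  \matrix_(i, j) ((c.1 (blk i) (blk j) == off i) && (c.2 (blk j) (blk i) == off j)).

Lemma sperm_ofE c i j :
  sperm_of c i j = (c.1 (blk i) (blk j) == off i) && (c.2 (blk j) (blk i) == off j).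
Proof. by rewrite mxE. Qed.

Lemma sperm_of_block c b1 b2 : sperm_of c (bidx b1 (c.1 b1 b2)) (bidx b2 (c.2 b2 b1)).
Proof. by rewrite sperm_ofE !blk_bidx !off_bidx !eqxx. Qed.

Lemma sperm_of_row c i j :
  sperm_of c i j = (j == let b := (c.1 (blk i))^-1%g (off i) in bidx b (c.2 b (blk i))).
Proof.
rewrite sperm_ofE /=; apply/andP/eqP => [[/eqP e1 /eqP e2]|->].
  by rewrite -e1 permK e2 bidx_blk_off.
by rewrite blk_bidx off_bidx permKV !eqxx.
Qed.

Lemma sperm_of_col c i j :
  sperm_of c i j = (i == let b := (c.2 (blk j))^-1%g (off j) in bidx b (c.1 b (blk j))).
Proof.
rewrite sperm_ofE /=; apply/andP/eqP => [[/eqP e1 /eqP e2]|->].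
  by rewrite -e2 permK e1 bidx_blk_off.
by rewrite blk_bidx off_bidx permKV !eqxx.
Qed.

Lemma is_sperm_of c : is_sperm (sperm_of c).
Proof.
apply/and3P; split; apply/forallP.
- move=> i; apply/cards1P; eexists; apply/setP => j.
  by rewrite !inE sperm_of_row.
- move=> j; apply/cards1P; eexists; apply/setP => i.
  by rewrite !inE sperm_of_col.
- move=> b1; apply/forallP => b2; apply/cards1P.
  exists (bidx b1 (c.1 b1 b2), bidx b2 (c.2 b2 b1)); apply/setP => -[i j].
  rewrite !inE /= sperm_ofE -[i %/ m == b1]/(blk i == b1) -[j %/ m == b2]/(blk j == b2).
  rewrite xpair_eqE.
  apply/and3P/andP => [[/eqP <- /eqP <- /andP[/eqP e1 /eqP e2]]|[/eqP -> /eqP ->]].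
    by rewrite e1 e2 !bidx_blk_off !eqxx.
  by rewrite !blk_bidx !off_bidx !eqxx.
Qed.

Lemma sperm_of_inj : injective sperm_of.
Proof.
move=> [r1 r2] [s1 s2] eq_rs.
have agree b1 b2 : r1 b1 b2 = s1 b1 b2 /\ r2 b2 b1 = s2 b2 b1.
  have := sperm_of_block (r1, r2) b1 b2.
  by rewrite eq_rs sperm_ofE /= !blk_bidx !off_bidx => /andP[/eqP -> /eqP ->].
congr (_, _); apply/ffunP => b; apply/permP => b'.
- by case: (agree b b').
- by case: (agree b' b).
Qed.

Section Decoding.
Variable A : 'M[bool]_(m ^ 2).
Hypothesis A_sperm : is_sperm A.

Lemma sperm_row_uniq i j j' : A i j -> A i j' -> j = j'.
Proof. by case/and3P: A_sperm => /forallP/(_ i) row_i _ _; apply: (cards1_uniq row_i). Qed.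

Lemma sperm_col_uniq i i' j : A i j -> A i' j -> i = i'.
Proof. by case/and3P: A_sperm => _ /forallP/(_ j) col_j _; apply: (cards1_uniq col_j). Qed.

Lemma sperm_block_uniq i j i' j' :
  blk i = blk i' -> blk j = blk j' -> A i j -> A i' j' -> (i, j) = (i', j').
Proof.
move=> eq_bi eq_bj Aij Aij'.
case/and3P: A_sperm => _ _ /forallP/(_ (blk i))/forallP/(_ (blk j)) block_ij.
have /= bi := congr1 val eq_bi; have /= bj := congr1 val eq_bj.
by apply: (cards1_uniq block_ij); rewrite /= ?bi ?bj !eqxx.
Qed.

Lemma sperm_block_exists b1 b2 :
  exists ij : 'I_(m ^ 2) * 'I_(m ^ 2), [&& blk ij.1 == b1, blk ij.2 == b2 & A ij.1 ij.2].
Proof.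
case/and3P: A_sperm => _ _ /forallP/(_ b1)/forallP/(_ b2)/cards1P[ij block_ij].
by exists ij; have := set11 ij; rewrite -block_ij inE.
Qed.

Definition block_pos b1 b2 := xchoose (sperm_block_exists b1 b2).

Lemma block_posP b1 b2 :
  [/\ blk (block_pos b1 b2).1 = b1, blk (block_pos b1 b2).2 = b2
    & A (block_pos b1 b2).1 (block_pos b1 b2).2].
Proof. by case/and3P: (xchooseP (sperm_block_exists b1 b2)) => /eqP-> /eqP->. Qed.

Lemma block_pos_row_inj b1 : injective (fun b2 => off (block_pos b1 b2).1).
Proof.
move=> b2 b2' /= eq_off.
have [r1 c1 A1] := block_posP b1 b2; have [r2 c2 A2] := block_posP b1 b2'.
have eq_row : (block_pos b1 b2).1 = (block_pos b1 b2').1 by apply: blk_off_inj; rewrite ?r1 ?r2.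
by rewrite eq_row in A1; rewrite -c1 -c2 (sperm_row_uniq A1 A2).
Qed.

Lemma block_pos_col_inj b2 : injective (fun b1 => off (block_pos b1 b2).2).
Proof.
move=> b1 b1' /= eq_off.
have [r1 c1 A1] := block_posP b1 b2; have [r2 c2 A2] := block_posP b1' b2.
have eq_col : (block_pos b1 b2).2 = (block_pos b1' b2).2 by apply: blk_off_inj; rewrite ?c1 ?c2.
by rewrite eq_col in A1; rewrite -r1 -r2 (sperm_col_uniq A1 A2).
Qed.

Definition sperm_decode : sperm_code :=
  ([ffun b1 => perm (@block_pos_row_inj b1)], [ffun b2 => perm (@block_pos_col_inj b2)]).

Lemma sperm_decodeK : sperm_of sperm_decode = A.
Proof.
apply/matrixP => i j; rewrite sperm_ofE /= !ffunE !permE /=.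
have [ri cj Apos] := block_posP (blk i) (blk j).
apply/andP/idP => [[/eqP off_i /eqP off_j]|Aij].
  suff pos_ij : block_pos (blk i) (blk j) = (i, j) by rewrite pos_ij in Apos.
  by apply/pair_eqP/andP; split; apply/eqP/blk_off_inj.
have [-> ->] := sperm_block_uniq ri cj Apos Aij.
by rewrite !eqxx.
Qed.
End Decoding.

Lemma sperm_set_im : sperm_set m = sperm_of @: setT.
Proof.
apply/setP => A; rewrite inE; apply/idP/imsetP => [A_sperm|[c _ ->]].
  by exists (sperm_decode A_sperm); rewrite ?sperm_decodeK.
exact: is_sperm_of.
Qed.

Lemma card_sperm_code : #|{: sperm_code}| = m`! ^ (2 * m).
Proof. by rewrite card_prod !card_ffun card_Sn !card_ord -expnD addnn -mul2n. Qed.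

Lemma card_sperm_set : #|sperm_set m| = m`! ^ (2 * m).
Proof. by rewrite sperm_set_im card_imset ?cardsT ?card_sperm_code //; apply: sperm_of_inj. Qed.

Definition agree_at c d (b : 'I_m * 'I_m) : bool :=
  (c.1 b.1 b.2 == d.1 b.1 b.2) && (c.2 b.2 b.1 == d.2 b.2 b.1).

Lemma disjoint_sperm_of c d :
  disjoint_mx (sperm_of c) (sperm_of d) = [forall b, ~~ agree_at c d b].
Proof.
apply/forallP/forallP => [disj [b1 b2]|no_agree i].
  apply/negP => /andP[/eqP e1 /eqP e2].
  have /forallP/(_ (bidx b2 (c.2 b2 b1))) := disj (bidx b1 (c.1 b1 b2)).
  by rewrite sperm_of_block sperm_ofE !blk_bidx !off_bidx e1 e2 !eqxx.
apply/forallP => j; apply/negP => /andP[]; rewrite !sperm_ofE.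
case/andP => /eqP c1 /eqP c2 /andP[/eqP d1 /eqP d2].
by have := no_agree (blk i, blk j); rewrite /agree_at /= c1 c2 d1 d2 !eqxx.
Qed.

Lemma not_disjoint_sperm_self A : A \in sperm_set m -> ~~ disjoint_mx A A.
Proof.
rewrite sperm_set_im => /imsetP[c _ ->]; rewrite disjoint_sperm_of negb_forall.
by apply/existsP; exists (ord0, ord0); rewrite negbK /agree_at !eqxx.
Qed.

Definition row_count E b1 := #|[set b2 | (b1, b2) \in E]|.
Definition col_count E b2 := #|[set b1 | (b1, b2) \in E]|.
Definition agree_count E : nat :=
  \prod_b1 (m - row_count E b1)`! * \prod_b2 (m - col_count E b2)`!.

Lemma card_agree_on c E :
  #|[set d | [forall b in E, agree_at c d b]]| = agree_count E.
Proof.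
pose fix1 b1 := [set s : 'S_m | [forall b2 in [set b2 | (b1, b2) \in E], s b2 == c.1 b1 b2]].
pose fix2 b2 := [set s : 'S_m | [forall b1 in [set b1 | (b1, b2) \in E], s b1 == c.2 b2 b1]].
rewrite (_ : [set d | _] = setX [set f : {ffun _} | [forall b1, f b1 \in fix1 b1]]
                              [set g : {ffun _} | [forall b2, g b2 \in fix2 b2]]).
  rewrite cardsX !card_ffun_family /agree_count.
  by congr (_ * _); apply: eq_bigr => b _; rewrite card_perm_fix card_ord.
apply/setP => -[f g]; rewrite !inE /=.
apply/forall_inP/andP => [agree_fg|[/forallP on_f /forallP on_g]].
  split; apply/forallP => b; rewrite inE; apply/forall_inP => b'; rewrite inE => Eb;
    by have /andP[/eqP e1 /eqP e2] := agree_fg _ Eb; rewrite -?e1 -?e2 eqxx.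
move=> [b1 b2] Eb; rewrite /agree_at /=.
have /[!inE]/forall_inP/(_ b2) := on_f b1; rewrite inE => /(_ Eb)/eqP ->.
have /[!inE]/forall_inP/(_ b1) := on_g b2; rewrite inE => /(_ Eb)/eqP ->.
by rewrite !eqxx.
Qed.

Lemma card_disjoint_codes c :
  ((#|[set d | [forall b, ~~ agree_at c d b]]|)%:R =
   \sum_(E : {set 'I_m * 'I_m}) (-1) ^+ #|E| * (agree_count E)%:R :> int)%R.
Proof.
rewrite -sum1_card natr_sum big_mkcond /=.
transitivity (\sum_d \sum_(E : {set 'I_m * 'I_m})
                (-1) ^+ #|E| * ([forall b in E, agree_at c d b])%:R : int)%R.
  by apply: eq_bigr => d _; rewrite -inclusion_exclusion_indicator inE; case: ifP.
rewrite exchange_big /=; apply: eq_bigr => E _.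
rewrite -mulr_sumr -(card_agree_on c E) -sum1_card natr_sum.
by congr (_ * _)%R; rewrite [RHS]big_mkcond; apply: eq_bigr => d _; rewrite inE; case: ifP.
Qed.

Lemma agree_count_set0 : agree_count set0 = m`! ^ (2 * m).
Proof.
rewrite /agree_count /row_count /col_count mul2n -addnn expnD.
by congr (_ * _); rewrite -[X in _ ^ X]card_ord -prod_nat_const;
  apply: eq_bigr => b _; rewrite (_ : [set _ | _] = set0) ?cards0 ?subn0 //;
  apply/setP => b'; rewrite !inE.
Qed.

Lemma prod_fact_delta (a : 'I_m) :
  \prod_(b : 'I_m) (m - (b == a))`! = n`! * m`! ^ n.
Proof.
rewrite (bigD1 a) //= eqxx subn1; congr (_ * _).
rewrite (eq_bigr (fun _ => m`!)) => [|b /negbTE ->]; last by rewrite subn0.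
by rewrite prod_nat_const cardC1 card_ord.
Qed.

Lemma agree_count_set1 a1 a2 : agree_count [set (a1, a2)] = (n`! * m`! ^ n) ^ 2.
Proof.
rewrite /agree_count expnS expn1 -{1}(prod_fact_delta a1) -(prod_fact_delta a2).
congr (_ * _); apply: eq_bigr => b _; congr (_ - _)`!.
  rewrite /row_count; case: eqP => [->|ne] /=.
    by rewrite -(cards1 a2); apply: eq_card => b2; rewrite !inE xpair_eqE eqxx.
  by rewrite -(cards0 'I_m); apply: eq_card => b2; rewrite !inE xpair_eqE; case: eqP.
rewrite /col_count; case: eqP => [->|ne] /=.
  by rewrite -(cards1 a1); apply: eq_card => b1; rewrite !inE xpair_eqE eqxx andbT.
by rewrite -(cards0 'I_m); apply: eq_card => b1; rewrite !inE xpair_eqE andbC; case: eqP.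
Qed.

Lemma agree_count_small_sum :
  (\sum_(E : {set 'I_m * 'I_m} | (#|E| < 2)%N) (-1) ^+ #|E| * (agree_count E)%:R = 0 :> int)%R.
Proof.
rewrite (bigD1 set0) ?cards0 //= agree_count_set0 expr0 mul1r.
rewrite (eq_bigl (mem [set [set b] | b : 'I_m * 'I_m])) => [|E]; last first.
  apply/andP/imsetP => [[E_small E_neq0]|[b _ ->]]; last by rewrite -cards_eq0 cards1.
  have /cards1P[b ->] : #|E| == 1.
    by move: E_small E_neq0; rewrite -cards_eq0; case: #|E| => [|[|]].
  by exists b.
rewrite big_imset /=; last by move=> b b' _ _; apply: set1_inj.
rewrite (eq_bigr (fun _ => - ((n`! * m`! ^ n) ^ 2)%:R)%R) => [|[a1 a2] _]; last first.
  by rewrite cards1 expr1 mulN1r agree_count_set1.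
rewrite sumr_const mulNrn -mulrnA; apply/eqP.
rewrite subr_eq0 eqr_nat card_prod card_ord; apply/eqP.
have -> : 2 * m = n * 2 + 2 by ring.
by rewrite factS expnD expnM; set y := ((m * n`!) ^ n); ring.
Qed.

Definition block_pattern (M : 'M[bool]_m) : {set 'I_m * 'I_m} := [set b | M b.1 b.2].

Definition pattern_mx (E : {set 'I_m * 'I_m}) : 'M[bool]_m := \matrix_(i, j) ((i, j) \in E).

Lemma block_pattern_bij : bijective block_pattern.
Proof.
exists pattern_mx.
  by move=> M; apply/matrixP => i j; rewrite mxE inE.
by move=> E; apply/setP => -[i j]; rewrite inE mxE.
Qed.

Lemma agree_count_pattern M : agree_count (block_pattern M) = psi_weight M.
Proof.
have count_lt (h : 'I_m -> {set 'I_m}) b : #|h b| < m.+1.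
  by rewrite ltnS (leq_trans (max_card _)) ?card_ord.
rewrite /agree_count (prodn_fibers (fun k => (m - k)`!) (count_lt _)).
rewrite (prodn_fibers (fun k => (m - k)`!) (count_lt _)) -big_split /=.
rewrite !big_ord_recr /= subnn subSn // subnn fact0 !exp1n !muln1.
apply: eq_bigr => k _; rewrite /psi expnD; congr (_ ^ _ * _ ^ _).
  apply: eq_card => b1; rewrite !inE; congr (_ == _).
  by apply: eq_card => b2; rewrite !inE.
apply: eq_card => b2; rewrite !inE; congr (_ == _).
by apply: eq_card => b1; rewrite !inE.
Qed.

Lemma card_disjoint_sperm_of c :
  ((#|[set B in sperm_set m | disjoint_mx (sperm_of c) B]|)%:R = xi m :> int)%R.
Proof.
have -> : [set B in sperm_set m | disjoint_mx (sperm_of c) B] =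
          sperm_of @: [set d | [forall b, ~~ agree_at c d b]].
  apply/setP => B; rewrite inE sperm_set_im.
  apply/andP/imsetP => [[/imsetP[d _ ->] disj]|[d]].
    by exists d; rewrite // inE -disjoint_sperm_of.
  by rewrite inE => no_agree ->; rewrite imset_f // disjoint_sperm_of.
rewrite card_imset; last exact: sperm_of_inj.
rewrite card_disjoint_codes (bigID (fun E => #|E| < 2)) /= agree_count_small_sum add0r xiE.
rewrite (reindex block_pattern); last exact: onW_bij block_pattern_bij.
by apply: eq_big => [M|M _]; rewrite ?agree_count_pattern ?natz -?leqNgt.
Qed.

Lemma card_disjoint_sperm_pairs :
  ((2 * #|disjoint_sperm_pairs m|)%:R = (m`! ^ (2 * m))%:R * xi m :> int)%R.
Proof.
rewrite -[disjoint_sperm_pairs m]/(related_pairs (sperm_set m) (@disjoint_mx _)).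
rewrite double_counting => [|A B _ _|A /not_disjoint_sperm_self/negbTE //]; last first.
  exact: disjoint_mx_sym.
rewrite natr_sum (eq_bigr (fun _ => xi m)) => [|A]; last first.
  move=> SA; have /imsetP[c _ ->] : A \in sperm_of @: setT by rewrite -sperm_set_im.
  exact: card_disjoint_sperm_of.
by rewrite sumr_const card_sperm_set mulr_natl.
Qed.

Lemma card_sperm_pairs :
  2 * #|sperm_pairs m| = m`! ^ (2 * m) * (m`! ^ (2 * m) - 1).
Proof. by rewrite cards_draws card_sperm_set (mul_bin_left _ 1) bin1 mulnC. Qed.

End SPermutationMatrices.

Local Open Scope ring_scope.

Theorem mainTheorem7 (n : nat) (hn : (2 <= n)%N) :
  p_n n = (xi n)%:~R / ((n`! ^ (2 * n))%N%:R - 1).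
Proof.
case: n hn => [//|n] hn; set N := (n.+1`! ^ (2 * n.+1))%N.
have N_gt1 : (1 < N)%N.
  have fact_gt1 : (1 < n.+1`!)%N by rewrite factS; have := fact_gt0 n; nia.
  by have := ltn_exp2l 0 (2 * n.+1) fact_gt1; rewrite expn0 => ->.
have N_neq0 : N%:R != 0 :> rat by rewrite pnatr_eq0 -lt0n ltnW.
have N1_neq0 : N%:R - 1 != 0 :> rat by rewrite subr_eq0 pnatr_eq1 gtn_eqF.
have disjE : (#|disjoint_sperm_pairs n.+1|)%:R = N%:R * (xi n.+1)%:~R / 2 :> rat.
  have := congr1 (fun z : int => z%:~R : rat) (card_disjoint_sperm_pairs n).
  by rewrite /= intrM !rmorph_nat natrM => <-; field.
have pairsE : (#|sperm_pairs n.+1|)%:R = N%:R * (N%:R - 1) / 2 :> rat.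
  have := congr1 (GRing.natmul 1 : nat -> rat) (card_sperm_pairs n).
  by rewrite !natrM natrB ?(ltnW N_gt1) // => <-; field.
by rewrite /p_n disjE pairsE; field; rewrite N_neq0 N1_neq0.
Qed.
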